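(* Let $G=(V,E)$ be a chordal graph and $T$ a spanning tree of $G$ rooted in $s\in V$. Then $T$ is an $\mathcal L$-tree of LexDFS of $G$ if and only if $T$ is an $\mathcal L$-tree of LexBFS of $G$.
   Context: Graphs are finite, simple, undirected and connected. A graph is chordal if it has no induced cycle of length greater than 3. LexDFS started at $s$: label $s$ with $(0)$, all other vertices with the empty label; for $i=1,\dots,n$ pick an unnumbered vertex $v$ with lexicographically largest label, set $\sigma(i)=v$, and prepend $i$ to the label of each unnumbered neighbor of $v$. LexBFS started at $s$: label $s$ with $(n)$, others empty; same loop but append $n-i$ to the label of each unnumbered neighbor of $v$. Orders of these searches are all possible outputs. The $\mathcal L$-tree of a vertex order $(v_1,\dots,v_n)$ is the spanning tree rooted at $v_1$ with an edge from each $v_i$ ($i>1$) to its rightmost neighbor $v_j$ with $j<i$. A spanning tree $T$ rooted at $s$ is an $\mathcal L$-tree of a search $\mathcal P$ of $G$ if some $\mathcal P$-order of $G$ starting at $s$ has $\mathcal L$-tree $T$. *)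

From mathcomp Require Import all_boot.
Set Implicit Arguments. Unset Strict Implicit. Unset Printing Implicit Defensive.

Definition simple_graph (T : finType) (e : rel T) : Prop :=
  symmetric e /\ irreflexive e.

Definition connected_graph (T : finType) (e : rel T) : Prop :=
  forall x y : T, connect e x y.

Definition induced_cycle (T : finType) (e : rel T) (c : seq T) : bool :=
  [&& uniq c, 3 < size c &
   [forall i : 'I_(size c), forall j : 'I_(size c),
      e (tnth (in_tuple c) i) (tnth (in_tuple c) j) ==
      ((j == i.+1 %% size c :> nat) || (i == j.+1 %% size c :> nat))]].

Definition chordal (T : finType) (e : rel T) : Prop :=
  forall c : seq T, ~~ induced_cycle e c.

(* lexicographic order on labels (a proper prefix is smaller) *)
Fixpoint lexle (a b : seq nat) : bool :=
  match a, b with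
  | [::], _ => true
  | _ :: _, [::] => false
  | x :: a', y :: b' => (x < y) || ((x == y) && lexle a' b')
  end.

(* Label of an unnumbered vertex w after the vertices of p have been
   numbered 1, ..., size p (in this order). *)
Definition lexdfs_label (T : finType) (e : rel T) (s : T) (p : seq T) (w : T)
  : seq nat :=
  foldl (fun l (iu : nat * T) => if e iu.2 w then iu.1 :: l else l)
        (if w == s then [:: 0] else [::]) (zip (iota 1 (size p)) p).

Definition lexbfs_label (T : finType) (e : rel T) (s : T) (p : seq T) (w : T)
  : seq nat :=
  foldl (fun l (iu : nat * T) => if e iu.2 w then rcons l (#|T| - iu.1) else l)
        (if w == s then [:: #|T|] else [::]) (zip (iota 1 (size p)) p).

Definition vertex_order (T : finType) (sigma : seq T) : bool :=
  uniq sigma && (size sigma == #|T|).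

Definition search_order (T : finType) (lab : seq T -> T -> seq nat)
  (s : T) (sigma : seq T) : Prop :=
  vertex_order sigma /\ ohead sigma = Some s /\
  forall (p q : seq T) (v : T), sigma = p ++ v :: q ->
    forall w, w \in v :: q -> lexle (lab p w) (lab p v).

Definition LexDFS_order (T : finType) (e : rel T) (s : T) (sigma : seq T) :=
  search_order (lexdfs_label e s) s sigma.
Definition LexBFS_order (T : finType) (e : rel T) (s : T) (sigma : seq T) :=
  search_order (lexbfs_label e s) s sigma.

Definition edge_rel (T : finType) (F : {set {set T}}) : rel T :=
  fun x y => [set x; y] \in F.

Definition spanning_tree (T : finType) (e : rel T) (F : {set {set T}}) : Prop :=
  (forall f, f \in F -> exists x y, e x y /\ f = [set x; y]) /\
  (forall x y : T, connect (edge_rel F) x y) /\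
  #|F| = #|T|.-1.

(* The L-tree of a vertex order: edge from each v_i (i > 1) to its rightmost
   neighbour v_j with j < i. *)
Definition Ltree (T : finType) (e : rel T) (sigma : seq T) : {set {set T}} :=
  [set f | [exists i : 'I_(size sigma), exists j : 'I_(size sigma),
     let vi := tnth (in_tuple sigma) i in
     let vj := tnth (in_tuple sigma) j in
     [&& (j < i)%N, e vj vi,
         [forall k : 'I_(size sigma),
            ((j < k)%N && (k < i)%N) ==> ~~ e (tnth (in_tuple sigma) k) vi] &
         f == [set vi; vj]]]].

Definition is_LexDFS_Ltree (T : finType) (e : rel T) (s : T) (F : {set {set T}}) :=
  exists sigma, LexDFS_order e s sigma /\ Ltree e sigma = F.
Definition is_LexBFS_Ltree (T : finType) (e : rel T) (s : T) (F : {set {set T}}) :=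
  exists sigma, LexBFS_order e s sigma /\ Ltree e sigma = F.

(* Let sigma be a LexDFS or LexBFS order and let parent v be the rightmost
   earlier neighbour of v, its parent in the L-tree of sigma.  Both searches
   compare unnumbered vertices by inclusion of their numbered neighbourhoods,
   which yields the four-point property: if a < b < c, ac is an edge and ab is
   not, some d < b is adjacent to b but not to c.  In a chordal graph this
   makes the earlier neighbours of every vertex pairwise adjacent, hence every
   earlier neighbour of v is an ancestor of v in the L-tree.  Now run the
   other search, choosing at each step a vertex of maximal label whose parent
   is already numbered; one exists because the numbered neighbours of a
   vertex are all adjacent to its parent, so its parent's label is at least as
   large.  In the resulting order parents precede children, and the ancestor
   property shows that parent v is still the rightmost earlier neighbour of v,
   so both orders have the same L-tree. *)

From mathcomp Require Import all_boot zify.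
Set Implicit Arguments. Unset Strict Implicit. Unset Printing Implicit Defensive.

Lemma lexle_refl : reflexive lexle.
Proof. by elim=> //= x a ->; rewrite eqxx orbT. Qed.

Lemma lexle_trans : transitive lexle.
Proof.
elim=> [|y b IH] [|x a] [|z c] //=.
case/orP=> [ltxy|/andP[/eqP <- hab]]; case/orP=> [ltyz|/andP[/eqP <- hbc]].
- by rewrite (ltn_trans ltxy ltyz).
- by rewrite ltxy.
- by rewrite ltyz.
- by rewrite eqxx (IH _ _ hab hbc) orbT.
Qed.

Lemma lexle_total : total lexle.
Proof. by elim=> [|x a IH] [|y b] //=; case: ltngtP => //= ->; rewrite eqxx IH. Qed.

Lemma lexle_anti : antisymmetric lexle.
Proof.
elim=> [|x a IH] [|y b] //= /andP[].
case: ltngtP => //= <- hab hba.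
by rewrite (IH b) // hab hba.
Qed.

Lemma lexle_subset a b : sorted gtn a -> sorted gtn b -> {subset a <= b} -> lexle a b.
Proof.
have gtn_trans : transitive gtn by move=> y x z /= lt_yx lt_zy; exact: ltn_trans lt_zy lt_yx.
elim: a b => [|x a IH] [|y b] //=; first by move=> _ _ /(_ x (mem_head _ _)).
move=> sa sb sub; have /allP a_lt_x := order_path_min gtn_trans sa.
have le_xy : x <= y.
  have /predU1P[-> //|xb] := sub x (mem_head _ _).
  by apply/ltnW; have /allP := order_path_min gtn_trans sb; apply.
case: ltngtP le_xy => //= exy _; subst y.
apply: IH (path_sorted sa) (path_sorted sb) _ => z za.
have /predU1P[ezx|//] : z \in x :: b by apply: sub; rewrite inE za orbT.
by have := a_lt_x z za; rewrite ezx /= ltnn.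
Qed.

Lemma lexle_max (T : eqType) (f : T -> seq nat) (l : seq T) x : x \in l ->
  exists2 m, m \in l & {in l, forall w, lexle (f w) (f m)}.
Proof.
elim: l x => // y [_ _ _|z l IH _ _].
  by exists y; rewrite ?mem_head // => w; rewrite inE => /eqP->; apply: lexle_refl.
have [m ml m_max] := IH z (mem_head z l).
have [le_ym|le_my] := orP (lexle_total (f y) (f m)).
  by exists m; [rewrite in_cons ml orbT | move=> w /predU1P[->|/m_max]].
exists y; first exact: mem_head.
by move=> w /predU1P[->|/m_max le_wm]; [apply: lexle_refl | apply: lexle_trans le_wm le_my].
Qed.

Section Labelling.
Variables (T : finType) (e : rel T) (s : T).

Definition nbr_indices (p : seq T) (w : T) : seq nat :=
  [seq iu.1 | iu <- zip (iota 1 (size p)) p & e iu.2 w].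

Lemma mem_nbr_indices p w i :
  (i \in nbr_indices p w) = (0 < i <= size p) && e (nth s p i.-1) w.
Proof.
have mem_zip_iota k u : ((k, u) \in zip (iota 1 (size p)) p) =
    (0 < k <= size p) && (u == nth s p k.-1).
  apply/idP/andP => [/(nthP (0, s))[m]|[k_p /eqP ->]].
    rewrite size_zip size_iota minnn => mp.
    by rewrite nth_zip ?size_iota // nth_iota // => -[<- <-]; split; [lia|].
  have -> : (k, nth s p k.-1) = nth (0, s) (zip (iota 1 (size p)) p) k.-1.
    by rewrite nth_zip ?size_iota // nth_iota //; [congr pair|]; lia.
  by apply: mem_nth; rewrite size_zip size_iota minnn; lia.
apply/mapP/andP => [[[j u]]|[i_p ew]].
  by rewrite mem_filter mem_zip_iota /= => /andP[euw /andP[jp /eqP eu]] ->; rewrite -eu.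
by exists (i, nth s p i.-1); rewrite // mem_filter mem_zip_iota /= ew i_p eqxx.
Qed.

Lemma nbr_indices_sorted p w : sorted ltn (nbr_indices p w).
Proof.
apply: (subseq_sorted ltn_trans _ (iota_ltn_sorted 1 (size p))).
rewrite -[X in subseq _ X](@unzip1_zip _ _ _ p) ?size_iota //.
exact/map_subseq/filter_subseq.
Qed.

Lemma nbr_indices_le p w i : i \in nbr_indices p w -> i <= size p.
Proof. by rewrite mem_nbr_indices => /andP[/andP[]]. Qed.

Lemma nbr_indices_subset p w v : {in p, forall x, e x w -> e x v} ->
  {subset nbr_indices p w <= nbr_indices p v}.
Proof.
move=> sub_wv i; rewrite !mem_nbr_indices => /andP[/andP[i_gt0 i_le] ew].
by rewrite i_gt0 i_le sub_wv //; apply: mem_nth; rewrite prednK.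
Qed.

Lemma index_nbr_indices p w x : x \in p ->
  ((index x p).+1 \in nbr_indices p w) = e x w.
Proof. by move=> xp; rewrite mem_nbr_indices /= nth_index // index_mem xp. Qed.

(* The only properties of the LexDFS and LexBFS labels used below. *)
Definition lex_monotone (lab : seq T -> T -> seq nat) :=
  [/\ forall w, lexle (lab [::] w) (lab [::] s),
      forall p w v, uniq p -> s \in p -> w \notin p -> v \notin p ->
        {in p, forall x, e x w -> e x v} -> lexle (lab p w) (lab p v) &
      forall p w v, uniq p -> s \in p -> w \notin p -> v \notin p ->
        {in p, forall x, e x w -> e x v} -> (exists2 x, x \in p & e x v && ~~ e x w) ->
        ~~ lexle (lab p v) (lab p w)].

Lemma lex_monotone_encoding (lab : seq T -> T -> seq nat) (decode : seq nat -> seq nat) :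
  (forall w, lexle (lab [::] w) (lab [::] s)) ->
  (forall p w, uniq p -> w != s -> sorted gtn (lab p w)) ->
  (forall p w v, uniq p -> w != s -> v != s ->
     {subset nbr_indices p w <= nbr_indices p v} -> {subset lab p w <= lab p v}) ->
  (forall p w, uniq p -> w != s -> decode (lab p w) = nbr_indices p w) ->
  lex_monotone lab.
Proof.
move=> lab_s lab_sorted lab_subset labK.
have ne_s (p : seq T) w : s \in p -> w \notin p -> w != s by move=> sp; apply: contraNneq => ->.
have lab_le p w v : uniq p -> s \in p -> w \notin p -> v \notin p ->
    {in p, forall x, e x w -> e x v} -> lexle (lab p w) (lab p v).
  move=> up sp wp vp sub_wv; have ws := ne_s _ _ sp wp; have vs := ne_s _ _ sp vp.
  by apply: lexle_subset; rewrite ?lab_sorted //; apply/lab_subset/nbr_indices_subset.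
split=> // p w v up sp wp vp sub_wv [x xp /andP[exv exw]].
apply/negP => le_vw.
have /(congr1 decode) : lab p w = lab p v by apply/lexle_anti; rewrite le_vw lab_le.
rewrite !labK ?(ne_s _ _ sp wp) ?(ne_s _ _ sp vp) // => /(congr1 (fun l => (index x p).+1 \in l)).
by rewrite !index_nbr_indices // exv (negbTE exw).
Qed.

Lemma lexdfs_label_monotone : lex_monotone (lexdfs_label e s).
Proof.
have dfs_label p w : w != s -> lexdfs_label e s p w = rev (nbr_indices p w).
  move=> ws; rewrite /lexdfs_label (negbTE ws); set z := zip _ _.
  suff foldE l0 : foldl (fun l (iu : nat * T) => if e iu.2 w then iu.1 :: l else l) l0 z
      = rev (nbr_indices p w) ++ l0 by rewrite foldE cats0.
  rewrite /nbr_indices -/z; elim: z l0 => //= iu z IH l0.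
  by rewrite IH; case: ifP; rewrite //= rev_cons cat_rcons.
apply: (@lex_monotone_encoding _ rev).
- by move=> w; rewrite /lexdfs_label /= eqxx; case: (w == s).
- by move=> p w _ ws; rewrite dfs_label // rev_sorted nbr_indices_sorted.
- by move=> p w v _ ws vs sub_wv i; rewrite !dfs_label // !mem_rev; apply: sub_wv.
- by move=> p w _ ws; rewrite dfs_label ?revK.
Qed.

Lemma lexbfs_label_monotone : lex_monotone (lexbfs_label e s).
Proof.
pose n := #|T|.
have bfs_label p w : w != s -> lexbfs_label e s p w = [seq n - i | i <- nbr_indices p w].
  move=> ws; rewrite /lexbfs_label (negbTE ws); set z := zip _ _.
  suff foldE l0 : foldl (fun l (iu : nat * T) => if e iu.2 w then rcons l (n - iu.1) else l) l0 z
      = l0 ++ [seq n - i | i <- nbr_indices p w] by rewrite foldE.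
  rewrite /nbr_indices -/z map_comp; elim: z l0 => [|iu z IH] l0 /=; first by rewrite cats0.
  by rewrite IH; case: ifP; rewrite //= cat_rcons.
have le_n p w i : uniq p -> i \in nbr_indices p w -> i <= n.
  move=> up /nbr_indices_le /leq_trans; apply.
  by rewrite -(card_uniqP up) max_card.
apply: (@lex_monotone_encoding _ (map (subn n))).
- by move=> w; rewrite /lexbfs_label /= eqxx; case: (w == s); rewrite //= ltnn eqxx.
- move=> p w up ws; rewrite bfs_label //.
  have := nbr_indices_sorted p w; have /allP := le_n p w _ up.
  case: (nbr_indices p w) => //= i l; elim: l i => //= j l IH i /andP[_ le_jn] /andP[lt_ij sl].
  by rewrite IH // andbT /gtn /=; lia.
- move=> p w v up ws vs sub_wv; rewrite !bfs_label // => _ /mapP[i iw ->].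
  exact/map_f/sub_wv.
- move=> p w up ws; rewrite bfs_label // -map_comp -[RHS]map_id.
  by apply/eq_in_map => i /(le_n _ _ _ up) le_in /=; rewrite subKn.
Qed.

End Labelling.

Section InducedPaths.
Variables (T : finType) (e : rel T) (x0 : T).
Hypotheses (esym : symmetric e) (eirr : irreflexive e).
Local Notation "P `_ i" := (nth x0 P i).

Definition walk (P : seq T) := forall i, i.+1 < size P -> e P`_i P`_i.+1.

Definition chordless (P : seq T) :=
  forall i j, i < size P -> j < size P -> e P`_i P`_j -> (j == i.+1) || (i == j.+1).

Definition induced_path (P : seq T) := [/\ walk P, uniq P & chordless P].

(* For [k = size P] nothing of [P] is kept after [P`_i], which therefore has
   to be the last vertex already. *)
Lemma walk_shortcut P i k (Q := take i.+1 P ++ drop k P) :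
  walk P -> i.+1 < k <= size P ->
  (k < size P -> e P`_i P`_k) -> (k = size P -> P`_i = P`_(size P).-1) ->
  [/\ walk Q, Q`_0 = P`_0, Q`_(size Q).-1 = P`_(size P).-1,
      size Q < size P & {subset Q <= P}].
Proof.
move=> wP /andP[ik kP] e_ik last_i.
have sizeQ : size Q = i.+1 + (size P - k) by rewrite size_cat size_takel ?size_drop; lia.
have nthQ m : Q`_m = if m < i.+1 then P`_m else P`_(k + (m - i.+1)).
  rewrite nth_cat size_takel; last lia.
  by case: ifP => lt_m; rewrite ?nth_take ?nth_drop.
split; last 1 first.
- by move=> x; rewrite mem_cat => /orP[/mem_take|/mem_drop].
- move=> m; rewrite sizeQ => m_lt; rewrite !nthQ.
  case: (ltngtP m.+1 i.+1) => [lt_mi|lt_im|[eq_mi]].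
  + by apply: wP; lia.
  + by rewrite (_ : k + (m.+1 - i.+1) = (k + (m - i.+1)).+1); [apply: wP|]; lia.
  + by rewrite eq_mi subnn addn0; apply: e_ik; lia.
- by rewrite nthQ.
- rewrite nthQ sizeQ; case: ifP => [lt_i|/negbT ge_i]; last by congr nth; lia.
  have k_eq : k = size P by lia.
  by rewrite (_ : _.-1 = i) ?last_i //; lia.
- by rewrite sizeQ; lia.
Qed.

Lemma induced_subwalk P : walk P -> 0 < size P ->
  exists Q, [/\ induced_path Q, Q`_0 = P`_0, Q`_(size Q).-1 = P`_(size P).-1 & {subset Q <= P}].
Proof.
have [n] := ubnP (size P); elim: n P => // n IH P /ltnSE size_P wP P_gt0.
have shortcut i k : i.+1 < k <= size P -> (k < size P -> e P`_i P`_k) ->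
    (k = size P -> P`_i = P`_(size P).-1) ->
    exists Q, [/\ induced_path Q, Q`_0 = P`_0, Q`_(size Q).-1 = P`_(size P).-1 & {subset Q <= P}].
  move=> ik e_ik last_i; have [wQ Q0 Ql lt_QP subQP] := walk_shortcut wP ik e_ik last_i.
  have [||R [indR R0 Rl subRQ]] := IH _ _ wQ; first exact: leq_trans lt_QP size_P.
    by rewrite size_cat size_takel; lia.
  by exists R; rewrite R0 Q0 Rl Ql; split=> // x /subRQ /subQP.
have [uP|/(uniqPn x0)[i [j [lt_ij lt_jP eq_ij]]]] := boolP (uniq P); last first.
  apply: (shortcut i j.+1); first by rewrite ltnS lt_ij.
    by rewrite eq_ij; apply: wP.
  by move=> <-; rewrite eq_ij.
have [/existsP[i /existsP[j /andP[lt_ij e_ij]]]|no_chord] :=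
  boolP [exists i : 'I_(size P), exists j : 'I_(size P), (i.+1 < j) && e P`_i P`_j].
  apply: (shortcut i j) => //; first by rewrite lt_ij ltnW.
  by move=> eq_j; move: (ltn_ord j); rewrite eq_j ltnn.
exists P; split=> //; split=> // i j lt_i lt_j e_ij.
wlog lt_ij : i j lt_i lt_j e_ij / i < j.
  move=> H; case: (ltngtP i j) => [|lt_ji|eq_ij]; first exact: H.
    by rewrite orbC; apply: H; rewrite // esym.
  by rewrite eq_ij eirr in e_ij.
move/existsPn: no_chord => /(_ (Ordinal lt_i)) /existsPn /(_ (Ordinal lt_j)) /=.
by rewrite e_ij andbT -leqNgt => le_j; rewrite (_ : j = i.+1) ?eqxx //; lia.
Qed.

Lemma walk_size_gt2 P u w : walk P -> P`_0 = u -> P`_(size P).-1 = w ->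
  u != w -> ~~ e u w -> exists k, size P = k.+3.
Proof.
case: P => [|x [|y [|z P]]] /= wP <- <-; rewrite ?eqxx //.
- by rewrite (wP 0 isT).
- by exists (size P).
Qed.

Lemma induced_path_adj P i j : induced_path P -> i < size P -> j < size P ->
  e P`_i P`_j = (j == i.+1) || (i == j.+1).
Proof.
case=> wP _ cP lt_i lt_j; apply/idP/idP; first exact: cP.
by case/orP=> /eqP eq_ij; [|rewrite esym]; rewrite eq_ij; apply: wP; rewrite -eq_ij.
Qed.

Lemma induced_cycle_cons Q d : induced_path Q -> 3 <= size Q -> d \notin Q ->
  e d Q`_0 -> e d Q`_(size Q).-1 -> (forall i, 0 < i < (size Q).-1 -> ~~ e d Q`_i) ->
  induced_cycle e (d :: Q).
Proof.
move=> indQ size_Q dQ d_first d_last d_mid.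
have [_ uQ _] := indQ.
rewrite /induced_cycle /= dQ uQ ltnS size_Q /=.
have modS k : k <= size Q -> k.+1 %% (size Q).+1 = if k == size Q then 0 else k.+1.
  by move=> le_k; case: eqP => [->|ne_k]; rewrite ?modnn // modn_small; lia.
have d_adj j : j < size Q -> e d Q`_j = (j == 0) || (j == (size Q).-1).
  move=> lt_j; apply/idP/idP => [d_j|/orP[]/eqP->//].
  by apply/negPn/negP; rewrite negb_or => /andP[j0 jl]; move: d_j; apply/negP/d_mid; lia.
apply/forallP => -[i lt_i]; apply/forallP => -[j lt_j]; rewrite !(tnth_nth x0) /=.
apply/eqP; rewrite !modS; try lia.
case: i j lt_i lt_j => [|i] [|j] /= lt_i lt_j.
- by rewrite eirr; repeat case: eqP => //; lia.
- by rewrite d_adj //; repeat case: eqP => //; lia.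
- by rewrite esym d_adj //; repeat case: eqP => //; lia.
- by rewrite induced_path_adj //; repeat case: eqP => //; lia.
Qed.

Lemma induced_path_take n P : induced_path P -> induced_path (take n P).
Proof.
case=> wP uP cP; rewrite /induced_path take_uniq // /walk /chordless size_take_min.
split=> // [i lt_i|i j lt_i lt_j]; rewrite !nth_take; try lia.
- by apply: wP; lia.
- by apply: cP; lia.
Qed.

Lemma chordal_fan Q d : chordal e -> induced_path Q -> 3 <= size Q -> d \notin Q ->
  e d Q`_0 -> e d Q`_(size Q).-1 -> e d Q`_1.
Proof.
move=> chordal_e indQ size_Q dQ d_first d_last; apply/negPn/negP => not_d1.
have [|j /and3P[j_gt0 lt_j d_j] j_min] :=
  ex_minnP (P := fun j => [&& 0 < j, j < size Q & e d Q`_j]).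
  by exists (size Q).-1; rewrite d_last andbT; apply/andP; split; lia.
have j_gt1 : 1 < j by case: j j_gt0 d_j {lt_j j_min} => [|[|j]] //; rewrite (negbTE not_d1).
have size_Q' : size (take j.+1 Q) = j.+1 by rewrite size_takel.
case/negP: (chordal_e (d :: take j.+1 Q)); apply: induced_cycle_cons.
- exact: induced_path_take.
- by rewrite size_Q'.
- by apply: contra dQ; apply: mem_take.
- by rewrite nth_take.
- by rewrite size_Q' nth_take.
- move=> i; rewrite size_Q' => /andP[i_gt0 lt_ij]; rewrite nth_take; last lia.
  by apply/negP => d_i; have := j_min i; rewrite i_gt0 d_i andbT; lia.
Qed.

End InducedPaths.

Section HighWalks.
Variables (T : finType) (e : rel T) (x0 : T) (r : T -> nat).
Hypotheses (esym : symmetric e) (eirr : irreflexive e) (chordal_e : chordal e).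
Hypothesis r_inj : injective r.
Hypothesis four_point : forall a b c, r a < r b -> r b < r c -> e a c -> ~~ e a b ->
  exists2 d, r d < r b & e d b && ~~ e d c.
Local Notation "P `_ i" := (nth x0 P i).

Definition high_walk u w P := [/\ walk e x0 P, P`_0 = u, P`_(size P).-1 = w &
  {in P, forall x, x != u -> x != w -> maxn (r u) (r w) < r x}].

Lemma high_walk_rev u w P : high_walk u w P -> high_walk w u (rev P).
Proof.
case=> wP P0 Pl highP; split.
- move=> i; rewrite size_rev => lt_i; rewrite !nth_rev 1?esym; try lia.
  by rewrite (_ : size P - i.+1 = (size P - i.+2).+1); [apply: wP|]; lia.
- by case: P {wP highP} P0 Pl => //= x P; rewrite nth_rev //= subn1.
- by case: P {wP highP} P0 Pl => //= x P; rewrite size_rev nth_rev //= subnn.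
- by move=> x; rewrite mem_rev maxnC => xP xw xu; apply: highP.
Qed.

Lemma high_walk_cons d w u P : 0 < size P -> high_walk w u P -> e d w ->
  maxn (r d) (r u) < r w -> high_walk d u (d :: P).
Proof.
case: P => // y P _ [wP P0 Pl highP] e_dw lt_w; split=> //.
- by case=> [_|i /ltnSE lt_i]; [move: P0 => /= -> | apply: wP].
- move=> x; rewrite inE => /predU1P[-> /eqP //|xP] _ xu.
  have [-> //|xw] := eqVneq x w.
  by have := highP x xP xw xu; rewrite !gtn_max in lt_w *; lia.
Qed.

(* Shorten [P] to an induced path [u, x1, ..., w] and say [r u < r w]; the
   four-point property for [u, w, x1] gives [d], which by induction on
   [maxn (r u) (r w)] is adjacent to [u], so [d] and the path form a chordless
   cycle. *)
Lemma high_walk_adjacent u w P : u != w -> high_walk u w P -> e u w.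
Proof.
have [n] := ubnP (maxn (r u) (r w)); elim: n u w P => // n IH u w P /ltnSE max_uw.
wlog lt_uw : u w P max_uw / r u < r w.
  move=> H uw hP; case: (ltngtP (r u) (r w)) => [lt_uw|lt_wu|/r_inj eq_uw].
  - exact: H max_uw lt_uw uw hP.
  - by rewrite esym; apply: (H w u (rev P)); rewrite 1?maxnC 1?eq_sym //; apply: high_walk_rev.
  - by rewrite eq_uw eqxx in uw.
move=> uw [wP P0 Pl highP]; have [//|not_uw] := boolP (e u w).
have P_gt0 : 0 < size P by case: P P0 Pl uw {wP highP} => //= <- <-; rewrite eqxx.
have [Q [indQ Q0 Ql subQP]] := induced_subwalk esym eirr wP P_gt0.
have [wQ uQ _] := indQ; rewrite P0 in Q0; rewrite Pl in Ql.
have highQ : {in Q, forall x, x != u -> x != w -> r w < r x}.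
  by move=> x /subQP xP xu xw; have := highP x xP xu xw; rewrite gtn_max => /andP[].
have [k size_Q] := walk_size_gt2 wQ Q0 Ql uw not_uw.
have x1Q : Q`_1 \in Q by rewrite mem_nth ?size_Q.
have x1u : Q`_1 != u by rewrite -Q0 (nth_uniq x0) // size_Q.
have x1w : Q`_1 != w by rewrite -Ql (nth_uniq x0) // size_Q.
have e_ux1 : e u Q`_1 by rewrite -Q0; apply: wQ; rewrite size_Q.
have [d lt_dw /andP[e_dw not_dx1]] := four_point lt_uw (highQ _ x1Q x1u x1w) e_ux1 not_uw.
have du : d != u by apply: contraNneq not_uw => <-.
have dw : d != w by apply: contraTneq e_dw => ->; rewrite eirr.
have e_du : e d u.
  apply: (IH d u (d :: rev Q)) => //; first by rewrite gtn_max; lia.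
  apply: (high_walk_cons (w := w)) => //; first by rewrite size_rev size_Q.
    apply: high_walk_rev; split=> // x xQ xu xw.
    by have lt_wx := highQ x xQ xu xw; rewrite gtn_max lt_wx (ltn_trans lt_uw lt_wx).
  by rewrite gtn_max lt_dw.
have dQ : d \notin Q by apply/negP => /highQ/(_ du dw); lia.
have := chordal_fan esym eirr chordal_e indQ; rewrite Q0 Ql size_Q.
by move=> /(_ d isT dQ e_du e_dw); rewrite (negbTE not_dx1).
Qed.

Lemma earlier_nbrs_adjacent a b v : r a < r v -> r b < r v -> e a v -> e b v ->
  a != b -> e a b.
Proof.
move=> lt_av lt_bv e_av e_bv ab; apply: (high_walk_adjacent (P := [:: a; v; b])) => //.
split=> // [[|[|i]] // _|x]; rewrite 1?esym //.
by rewrite !inE => /or3P[]/eqP-> //; rewrite ?eqxx // gtn_max lt_av lt_bv.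
Qed.

End HighWalks.

Lemma split_at_index (T : eqType) (x : T) p :
  x \in p -> p = take (index x p) p ++ x :: drop (index x p).+1 p.
Proof.
by move=> xp; rewrite -{1}(cat_take_drop (index x p) p) (drop_nth x) ?index_mem ?nth_index.
Qed.

Lemma mem_vertex_order (T : finType) (rho : seq T) x : vertex_order rho -> x \in rho.
Proof.
case/andP=> u_rho /eqP size_rho; apply/negPn/negP => x_rho.
have := max_card (predU1 x (mem rho)).
by rewrite cardU1 x_rho (card_uniqP u_rho) size_rho ltnn.
Qed.

Lemma connect_cross (T : finType) (e : rel T) (A : pred T) x y :
  A x -> ~~ A y -> connect e x y -> exists a b, [/\ A a, ~~ A b & e a b].
Proof.
move=> Ax Ay /connectP[q xq y_last]; rewrite {y}y_last in Ay.
elim: q x Ax xq Ay => /= [|z q IH] x Ax; first by rewrite Ax.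
case/andP=> e_xz zq; have [Az|Az] := boolP (A z); first exact: IH zq.
by exists x, z.
Qed.

Section LastNeighbour.
Variables (T : finType) (e : rel T).

Definition last_nbr (rho : seq T) v x :=
  [&& index x rho < index v rho, e x v &
      [forall y, (index x rho < index y rho < index v rho) ==> ~~ e y v]].

Lemma last_nbr_unique rho v x x' : x \in rho -> x' \in rho ->
  last_nbr rho v x -> last_nbr rho v x' -> x = x'.
Proof.
move=> x_rho x'_rho /and3P[lt_xv e_xv /forallP last_x] /and3P[lt_x'v e_x'v /forallP last_x'].
case: (ltngtP (index x rho) (index x' rho)) => [lt_xx'|lt_x'x|]; last exact: index_inj.
- by move: (last_x x'); rewrite lt_xx' lt_x'v e_x'v.
- by move: (last_x' x); rewrite lt_x'x lt_xv e_xv.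
Qed.

Lemma last_nbr_ne_head (rho : seq T) s v x : ohead rho = Some s -> last_nbr rho v x -> v != s.
Proof.
by case: rho => // a rho [->] /and3P[lt_xv _ _]; apply: contraTneq lt_xv => ->; rewrite /= eqxx.
Qed.

Lemma mem_Ltree rho f : vertex_order rho ->
  (f \in Ltree e rho) = [exists v, exists x, last_nbr rho v x && (f == [set v; x])].
Proof.
move=> rho_vo; have /andP[u_rho _] := rho_vo; have rhoT x := mem_vertex_order x rho_vo.
rewrite inE; apply/existsP/existsP => [[i /existsP[j]]|[v /existsP[x]]].
  have d := tnth (in_tuple rho) i; rewrite !(tnth_nth d) /=.
  case/and4P=> lt_ji e_ji /forallP last_j /eqP->.
  exists (nth d rho i); apply/existsP; exists (nth d rho j); rewrite eqxx andbT.
  rewrite /last_nbr !index_uniq // lt_ji e_ji /=.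
  apply/forallP => y; apply/implyP => /andP[lt_jy lt_yi].
  have lt_y : index y rho < size rho by rewrite index_mem.
  by move: (last_j (Ordinal lt_y)); rewrite (tnth_nth d) /= lt_jy lt_yi nth_index.
case/andP=> /and3P[lt_xv e_xv /forallP last_x] /eqP->.
have lt_v : index v rho < size rho by rewrite index_mem.
have lt_x : index x rho < size rho by rewrite index_mem.
exists (Ordinal lt_v); apply/existsP; exists (Ordinal lt_x).
rewrite !(tnth_nth x) /= !nth_index // lt_xv e_xv eqxx andbT /=.
apply/forallP => k; apply/implyP => /andP[lt_xk lt_kv]; rewrite (tnth_nth x).
by have := last_x (nth x rho k); rewrite index_uniq // lt_xk lt_kv.
Qed.

End LastNeighbour.

Section SearchTree.
Variables (T : finType) (e : rel T) (s : T).
Hypotheses (esym : symmetric e) (eirr : irreflexive e).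
Hypotheses (conn : connected_graph e) (chordal_e : chordal e).
Variables (lab : seq T -> T -> seq nat) (sigma : seq T).
Hypotheses (lab_mono : lex_monotone e s lab) (sigma_search : search_order lab s sigma).

Local Notation pos x := (index x sigma).

Lemma mem_sigma x : x \in sigma.
Proof. by case: sigma_search => /mem_vertex_order. Qed.

Lemma pos_inj x y : pos x = pos y -> x = y.
Proof. exact: index_inj (mem_sigma x) (mem_sigma y). Qed.

Lemma pos_s : pos s = 0.
Proof. by case: sigma_search => _ []; case: sigma => //= x rho [->]; rewrite eqxx. Qed.

Lemma pos_gt0 v : v != s -> 0 < pos v.
Proof. by apply: contraNT; rewrite lt0n negbK -pos_s => /eqP/pos_inj->. Qed.

Lemma mem_take_pos b x : (x \in take (pos b) sigma) = (pos x < pos b).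
Proof. by rewrite in_take ?mem_sigma. Qed.

Lemma search_le b w : pos b <= pos w ->
  lexle (lab (take (pos b) sigma) w) (lab (take (pos b) sigma) b).
Proof.
move=> le_bw; case: sigma_search => _ [_ search].
apply: (search _ _ _ (split_at_index (mem_sigma b))).
by have := mem_sigma w; rewrite {1}(split_at_index (mem_sigma b)) mem_cat mem_take_pos ltnNge le_bw.
Qed.

Lemma search_nbr_subset b c : pos b <= pos c ->
  {in take (pos b) sigma, forall x, e x b -> e x c} ->
  {in take (pos b) sigma, forall x, e x c -> e x b}.
Proof.
move=> le_bc sub_bc x xb e_xc; apply/negPn/negP => not_xb.
have := search_le le_bc; apply/negP; case: lab_mono => _ _; apply=> //.
- by rewrite take_uniq //; case: sigma_search => /andP[].
- by move: xb; rewrite !mem_take_pos pos_s; apply: leq_ltn_trans.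
- by rewrite mem_take_pos ltnn.
- by rewrite mem_take_pos -leqNgt.
- by exists x; rewrite // e_xc.
Qed.

Lemma search_four_point a b c : pos a < pos b -> pos b < pos c -> e a c -> ~~ e a b ->
  exists2 d, pos d < pos b & e d b && ~~ e d c.
Proof.
move=> lt_ab lt_bc e_ac not_ab.
have [/existsP[d /andP[lt_db e_db]]|no_d] :=
  boolP [exists d, (pos d < pos b) && (e d b && ~~ e d c)]; first by exists d.
case/negP: not_ab; apply: (search_nbr_subset (ltnW lt_bc) _ _ e_ac); last by rewrite mem_take_pos.
move=> x; rewrite mem_take_pos => lt_xb e_xb; apply/negPn/negP => not_xc.
by move/existsPn: no_d => /(_ x); rewrite lt_xb e_xb not_xc.
Qed.

Lemma search_earlier_nbrs_adjacent a b v : pos a < pos v -> pos b < pos v ->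
  e a v -> e b v -> a != b -> e a b.
Proof. exact: (earlier_nbrs_adjacent s esym eirr chordal_e pos_inj search_four_point). Qed.

Lemma earlier_nbr_exists v : v != s -> exists2 x, pos x < pos v & e x v.
Proof.
move=> vs; have [/existsP[x /andP[lt_xv e_xv]]|no_x] :=
  boolP [exists x, (pos x < pos v) && e x v]; first by exists x.
have no_nbr x : pos x < pos v -> ~~ e x v.
  by move=> lt_xv; apply: contra no_x => e_xv; apply/existsP; exists x; rewrite lt_xv.
have s_before : pos s < pos v by rewrite pos_s pos_gt0.
have [a [b [/= lt_av]]] :=
  connect_cross (A := fun x => pos x < pos v) s_before (negbT (ltnn _)) (conn s v).
rewrite -leqNgt => le_vb e_ab.
have sub_vb : {in take (pos v) sigma, forall x, e x v -> e x b}.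
  by move=> x; rewrite mem_take_pos => /no_nbr/negbTE->.
have := search_nbr_subset le_vb sub_vb (x := a); rewrite mem_take_pos => /(_ lt_av e_ab).
by rewrite (negbTE (no_nbr a lt_av)).
Qed.

(* The default [s] is only taken at the root [v = s]. *)
Definition parent v := odflt s [pick x | last_nbr e sigma v x].

Lemma parent_last_nbr v : v != s -> last_nbr e sigma v (parent v).
Proof.
move=> vs; rewrite /parent; case: pickP => [x //|no_last]; exfalso.
have [x lt_xv e_xv] := earlier_nbr_exists vs.
pose P k := (k < pos v) && e (nth s sigma k) v.
have exP : exists k, P k by exists (pos x); rewrite /P lt_xv nth_index ?mem_sigma.
have ubP k : P k -> k <= pos v by case/andP=> /ltnW.
have [k /andP[lt_kv e_kv] k_max] := ex_maxnP exP ubP.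
have lt_k : k < size sigma by rewrite (ltn_trans lt_kv) ?index_mem ?mem_sigma.
have u_sigma : uniq sigma by case: sigma_search => /andP[].
move: (no_last (nth s sigma k)); rewrite /last_nbr index_uniq // lt_kv e_kv /=.
move/negbT/forallPn => [y]; rewrite negb_imply negbK => /andP[/andP[lt_ky lt_yv] e_yv].
have := k_max (pos y); rewrite /P lt_yv nth_index ?mem_sigma // e_yv => /(_ isT).
by rewrite leqNgt lt_ky.
Qed.

Lemma pos_parent_lt v : v != s -> pos (parent v) < pos v.
Proof. by case/parent_last_nbr/and3P. Qed.

Lemma parent_adj v : v != s -> e (parent v) v.
Proof. by case/parent_last_nbr/and3P. Qed.

Lemma parent_last v y : v != s -> pos (parent v) < pos y < pos v -> ~~ e y v.
Proof. by case/parent_last_nbr/and3P=> _ _ /forallP/(_ y)/implyP. Qed.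

Inductive ancestor : T -> T -> Prop :=
| ancestor_refl x : ancestor x x
| ancestor_parent x v : v != s -> ancestor x (parent v) -> ancestor x v.

Lemma ancestor_closed (p : seq T) x y : {in p, forall v, v != s -> parent v \in p} ->
  ancestor y x -> x \in p -> y \in p.
Proof. by move=> closed_p; elim=> // {}x v vs _ IH xp; apply/IH/closed_p. Qed.

Lemma ancestor_index (rho : seq T) x y :
  (forall v, v != s -> index (parent v) rho < index v rho) ->
  ancestor y x -> index y rho <= index x rho.
Proof. by move=> par_rho; elim=> // {}x v vs _ /leq_trans; apply; apply/ltnW/par_rho. Qed.

Lemma earlier_nbr_ancestor v y : pos y < pos v -> e y v -> ancestor y (parent v).
Proof.
have [n] := ubnP (pos v); elim: n v => // n IH v /ltnSE le_vn lt_yv e_yv.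
have vs : v != s by apply: contraTneq lt_yv => ->; rewrite pos_s.
have [->|y_par] := eqVneq y (parent v); first exact: ancestor_refl.
have lt_y_par : pos y < pos (parent v).
  case: ltngtP => [//|lt_par_y|/pos_inj eq_y]; last by rewrite eq_y eqxx in y_par.
  by have := parent_last (y := y) vs; rewrite lt_par_y lt_yv e_yv => /(_ isT).
have par_s : parent v != s by apply: contraTneq lt_y_par => ->; rewrite pos_s.
apply: ancestor_parent par_s (IH _ _ lt_y_par _).
  by have := pos_parent_lt vs; lia.
exact: search_earlier_nbrs_adjacent lt_yv (pos_parent_lt vs) e_yv (parent_adj vs) y_par.
Qed.

(* Walk up the L-tree from [m] until the parent is numbered: each step keeps
   the numbered neighbourhood, by the clique property. *)
Lemma dominating_child (p : seq T) m : s \in p -> {in p, forall v, v != s -> parent v \in p} ->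
  m \notin p -> exists y, [/\ y \notin p, parent y \in p & {in p, forall x, e x m -> e x y}].
Proof.
move=> sp closed_p; have [n] := ubnP (pos m); elim: n m => // n IH m /ltnSE le_mn mp.
have ms : m != s by apply: contraNneq mp => ->.
have [par_p|par_np] := boolP (parent m \in p); first by exists m; split=> // x.
have sub_m : {in p, forall x, e x m -> e x (parent m)}.
  move=> x xp e_xm; have xm : x != m by apply: contraNneq mp => <-.
  case: (ltngtP (pos x) (pos m)) => [lt_xm|lt_mx|/pos_inj eq_xm]; last by rewrite eq_xm eqxx in xm.
    apply: search_earlier_nbrs_adjacent lt_xm (pos_parent_lt ms) e_xm (parent_adj ms) _.
    by apply: contraNneq par_np => <-.
  have xs : x != s by apply: contraTneq lt_mx => ->; rewrite pos_s.
  have e_mx : e m x by rewrite esym.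
  have anc_mx := ancestor_parent xs (earlier_nbr_ancestor lt_mx e_mx).
  by rewrite (ancestor_closed closed_p anc_mx xp) in mp.
have [|y [yp par_y sub_y]] := IH (parent m) _ par_np.
  by have := pos_parent_lt ms; lia.
by exists y; split=> // x xp /(sub_m x xp)/(sub_y x xp).
Qed.

Variable lab' : seq T -> T -> seq nat.
Hypothesis lab'_mono : lex_monotone e s lab'.

Definition tree_search_prefix (p : seq T) :=
  uniq p /\ forall p1 v q, p = p1 ++ v :: q ->
    [/\ p1 = [::] -> v = s, v != s -> parent v \in p1 &
        forall w, w \notin p1 -> lexle (lab' p1 w) (lab' p1 v)].

Lemma tree_search_prefix_rcons p y : tree_search_prefix p -> y \notin p ->
  (p = [::] -> y = s) -> (y != s -> parent y \in p) ->
  (forall w, w \notin p -> lexle (lab' p w) (lab' p y)) -> tree_search_prefix (rcons p y).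
Proof.
case=> u_p split_p yp y_first y_par y_max; split=> [|p1 v]; first by rewrite rcons_uniq yp.
case/lastP=> [|q z]; first by rewrite cats1 => /rcons_inj[<- <-].
by rewrite -rcons_cons -rcons_cat => /rcons_inj[/split_p].
Qed.

Lemma tree_search_prefix_extend p : tree_search_prefix p -> size p < #|T| ->
  exists y, tree_search_prefix (rcons p y).
Proof.
move=> tp lt_pT; have [u_p split_p] := tp.
have [p0|p_ne] := eqVneq p [::].
  have [lab_s _ _] := lab'_mono; exists s.
  by apply: tree_search_prefix_rcons; rewrite // p0 ?eqxx // => w _; apply: lab_s.
have sp : s \in p.
  case: p p_ne split_p {lt_pT tp u_p} => // v q _.
  by case/(_ [::] v q erefl) => /(_ erefl)->; rewrite mem_head.
have closed_p : {in p, forall v, v != s -> parent v \in p}.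
  by move=> v vp vs; have [_ /(_ vs)/mem_take] := split_p _ _ _ (split_at_index vp).
have [w0 w0p] : exists w, w \notin p.
  apply/existsP; apply: contraTT lt_pT => /existsPn all_p; rewrite -leqNgt.
  rewrite -(card_uniqP u_p); apply/subset_leq_card/subsetP => x _.
  by move: (all_p x); rewrite negbK.
have w0_free : w0 \in [seq w <- enum T | w \notin p] by rewrite mem_filter w0p mem_enum.
have [m] := lexle_max (lab' p) w0_free; rewrite mem_filter => /andP[mp _] m_max.
have [y [yp par_y sub_my]] := dominating_child sp closed_p mp.
have [_ lab_mono' _] := lab'_mono.
have y_max w : w \notin p -> lexle (lab' p w) (lab' p y).
  move=> wp; apply: lexle_trans (lab_mono' _ _ _ u_p sp mp yp sub_my).
  by apply: m_max; rewrite mem_filter wp mem_enum.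
by exists y; apply: tree_search_prefix_rcons => // p0; rewrite p0 eqxx in p_ne.
Qed.

Lemma tree_search_prefix_exists k : k <= #|T| -> exists2 p, size p = k & tree_search_prefix p.
Proof.
elim: k => [|k IH] lt_kT; first by exists [::]; split=> // -[].
have [p size_p tp] := IH (ltnW lt_kT).
have [|y ty] := tree_search_prefix_extend tp; first by rewrite size_p.
by exists (rcons p y); rewrite ?size_rcons ?size_p.
Qed.

Lemma tree_search_order : exists tau,
  search_order lab' s tau /\ forall v, v != s -> index (parent v) tau < index v tau.
Proof.
have [tau size_tau [u_tau split_tau]] := tree_search_prefix_exists (leqnn #|T|).
have tau_vo : vertex_order tau by rewrite /vertex_order u_tau size_tau eqxx.
exists tau; split; last first.
  move=> v vs; have /split_tau[_ /(_ vs)] := split_at_index (mem_vertex_order v tau_vo).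
  by rewrite in_take // (mem_vertex_order _ tau_vo).
split=> //; split.
  have := mem_vertex_order s tau_vo.
  by case: tau {size_tau u_tau tau_vo} split_tau => // v q /(_ [::] v q erefl)[/(_ erefl)->].
move=> p1 v q eq_tau w wvq; have [_ _] := split_tau _ _ _ eq_tau; apply.
by move: u_tau; rewrite eq_tau cat_uniq => /and3P[_ /hasPn/(_ w wvq)].
Qed.

Lemma last_nbr_parent (rho : seq T) v :
  (forall v, v != s -> index (parent v) rho < index v rho) ->
  v != s -> last_nbr e rho v (parent v).
Proof.
move=> par_rho vs; rewrite /last_nbr par_rho // parent_adj //=.
apply/forallP => y; apply/implyP => /andP[lt_par_y lt_yv]; apply/negP => e_yv.
case: (ltngtP (pos y) (pos v)) => [lt_yv'|lt_vy|/pos_inj eq_yv].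
- have := ancestor_index par_rho (earlier_nbr_ancestor lt_yv' e_yv).
  by rewrite leqNgt lt_par_y.
- have ys : y != s by apply: contraTneq lt_vy => ->; rewrite pos_s.
  have e_vy : e v y by rewrite esym.
  have := ancestor_index par_rho (ancestor_parent ys (earlier_nbr_ancestor lt_vy e_vy)).
  by rewrite leqNgt lt_yv.
- by rewrite eq_yv eirr in e_yv.
Qed.

Lemma Ltree_tree_search : exists tau, search_order lab' s tau /\ Ltree e tau = Ltree e sigma.
Proof.
have [tau [tau_search par_tau]] := tree_search_order.
have [tau_vo [tau_s _]] := tau_search.
have [sigma_vo [sigma_s _]] := sigma_search.
exists tau; split=> //; apply/setP => f; rewrite !mem_Ltree //.
apply/existsP/existsP => -[v /existsP[x /andP[last_x f_eq]]];
  exists v; apply/existsP; exists x; rewrite f_eq andbT.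
- have vs := last_nbr_ne_head tau_s last_x.
  have tau_T y := mem_vertex_order y tau_vo.
  rewrite (last_nbr_unique (tau_T x) (tau_T _) last_x (last_nbr_parent par_tau vs)).
  exact: parent_last_nbr.
- have vs := last_nbr_ne_head sigma_s last_x.
  rewrite (last_nbr_unique (mem_sigma x) (mem_sigma _) last_x (parent_last_nbr vs)).
  exact: last_nbr_parent.
Qed.

End SearchTree.

Theorem corollary15 (T : finType) (e : rel T) (s : T) (F : {set {set T}}) :
  simple_graph e -> connected_graph e -> chordal e ->
  spanning_tree e F ->
  (is_LexDFS_Ltree e s F <-> is_LexBFS_Ltree e s F).
Proof.
move=> [esym eirr] conn chordal_e _.
have transfer := Ltree_tree_search esym eirr conn chordal_e.
have dfs := lexdfs_label_monotone e s; have bfs := lexbfs_label_monotone e s.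
split=> -[sigma [sigma_search <-]].
- exact: transfer _ _ dfs sigma_search _ bfs.
- exact: transfer _ _ bfs sigma_search _ dfs.
Qed.
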